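(* Let $d\ge 1$ and let $s$ be an odd integer with $1<s<2^d$. Then $\lambda^*(d,s)\le \frac12$.
   Context: For integers $n\ge d\ge 1$, a $d$-flat in $\mathbb{F}_2^n$ is a set $x_0+U$ with $x_0\in\mathbb{F}_2^n$ and $U$ a $d$-dimensional linear subspace of $\mathbb{F}_2^n$. For $A\subseteq\mathbb{F}_2^n$ and an integer $0\le s\le 2^d$, $\lambda^*(n,d,s,A)$ denotes the fraction of $d$-flats $Q$ in $\mathbb{F}_2^n$ with $|Q\cap A|=s$. Let $\lambda^*(n,d,s)=\max_{A\subseteq\mathbb{F}_2^n}\lambda^*(n,d,s,A)$; this is non-increasing in $n$, and $\lambda^*(d,s)=\lim_{n\to\infty}\lambda^*(n,d,s)$. *)

From mathcomp Require Import all_boot all_order all_algebra.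
From mathcomp Require Import all_classical all_reals all_analysis.
Set Implicit Arguments. Unset Strict Implicit. Unset Printing Implicit Defensive.
Import Order.TTheory GRing.Theory Num.Theory numFieldNormedType.Exports.
Local Open Scope ring_scope.

Definition vec (n : nat) := 'rV['F_2]_n.

(* The set of d-flats of F_2^n: sets x0 + U with U the row space of a
   d x n matrix of rank d (i.e. U a d-dimensional linear subspace). *)
Definition flats (n d : nat) : {set {set vec n}} :=
  [set Q : {set vec n} | [exists x0 : vec n, exists U : 'M['F_2]_(d, n),
      (\rank U == d) && (Q == [set x : vec n | (x - x0 <= U)%MS])]].

Definition lambda_A (R : realType) (n d s : nat) (A : {set vec n}) : R :=
  #|[set Q in flats n d | (#|Q :&: A| == s)%N]|%:R / #|flats n d|%:R.

(* lambda^*(n,d,s) = max over A ⊆ F_2^n (all values are >= 0). *)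
Definition lambda_star (R : realType) (n d s : nat) : R :=
  \big[Num.max/0]_(A : {set vec n}) @lambda_A R n d s A.

Definition lambda_lim (R : realType) (d s : nat) : R :=
  limn (fun n => lambda_star R n d s).

(* Weight each point y of F_2^n by the sign (-1)^[y \in A].  The sum, over all x and
   all d x n matrices h, of the product of the signs at the 2^d points x + w h is a
   Gowers-type sum; splitting off the first row of h exhibits it as a sum of squares,
   so it is nonnegative when d >= 1.  For h of full rank these points form the d-flat
   x + rowspace h, whose sign product is (-1)^|Q \cap A|, and every d-flat is hit by
   the same number of pairs (x, h); the rank-deficient h make up at most a fraction
   2^d / 2^n of all matrices.  Hence at most a fraction 1/2 + 2^d / 2^n of the d-flats
   meet A in an odd number of points, in particular in exactly s points, and the
   bound tends to 1/2. *)

From mathcomp Require Import all_boot all_order all_algebra.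
From mathcomp Require Import all_classical all_reals all_analysis.
From mathcomp Require Import zify ring.
Import Order.TTheory GRing.Theory Num.Theory numFieldNormedType.Exports.
Set Implicit Arguments. Unset Strict Implicit. Unset Printing Implicit Defensive.
Local Open Scope ring_scope.

Section BigBlockMatrices.
Variables (R : Type) (idx : R) (op : Monoid.com_law idx) (T : finType).

Lemma big_col_mx m1 m2 n (F : 'M[T]_(m1 + m2, n) -> R) :
  \big[op/idx]_(A : 'M[T]_(m1 + m2, n)) F A =
  \big[op/idx]_(A1 : 'M[T]_(m1, n)) \big[op/idx]_(A2 : 'M[T]_(m2, n)) F (col_mx A1 A2).
Proof.
rewrite pair_big (reindex (fun p => col_mx p.1 p.2)) //=.
exists (fun A => (usubmx A, dsubmx A)) => [[A1 A2] _ | A _] /=.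
  by rewrite col_mxKu col_mxKd.
by rewrite vsubmxK.
Qed.

Lemma big_row_mx m n1 n2 (F : 'M[T]_(m, n1 + n2) -> R) :
  \big[op/idx]_(A : 'M[T]_(m, n1 + n2)) F A =
  \big[op/idx]_(A1 : 'M[T]_(m, n1)) \big[op/idx]_(A2 : 'M[T]_(m, n2)) F (row_mx A1 A2).
Proof.
rewrite pair_big (reindex (fun p => row_mx p.1 p.2)) //=.
exists (fun A => (lsubmx A, rsubmx A)) => [[A1 A2] _ | A _] /=.
  by rewrite row_mxKl row_mxKr.
by rewrite hsubmxK.
Qed.

End BigBlockMatrices.

Lemma rV1_F2_neq0 (a : 'rV['F_2]_1) : (a != 0) = (a == 1).
Proof.
rewrite [a]mx11_scalar; case: (a 0 0) => [[|[|m]] lt_m2] //.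
  rewrite (_ : Ordinal _ = 0); last exact: val_inj.
  by rewrite raddf0 eqxx eq_sym oner_eq0.
rewrite (_ : Ordinal _ = 1); last exact: val_inj.
by rewrite eqxx oner_eq0.
Qed.

Lemma big_rV1_F2 (R : Type) (idx : R) (op : Monoid.com_law idx)
    (F : 'rV['F_2]_1 -> R) :
  \big[op/idx]_(a : 'rV['F_2]_1) F a = op (F 0) (F 1).
Proof.
rewrite (bigD1 0) //= (big_pred1 1) // => a.
exact: rV1_F2_neq0.
Qed.

Lemma card_rV_F2 k : #|'rV['F_2]_k| = (2 ^ k)%N.
Proof. by rewrite card_mx card_Fp // mul1n. Qed.

Lemma submxB (F : fieldType) m1 m2 n (A B : 'M[F]_(m1, n)) (C : 'M[F]_(m2, n)) :
  (A <= C)%MS -> (B <= C)%MS -> (A - B <= C)%MS.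
Proof. by move=> sAC sBC; rewrite addmx_sub // eqmx_opp. Qed.

Section FlatParametrisation.
Variables n d : nat.
Implicit Types (x y : vec n) (h M : 'M['F_2]_(d, n)).

Definition flat_of x h : {set vec n} := [set y | (y - x <= h)%MS].

Lemma flat_ofE x h : flat_of x h = [set x + w *m h | w : 'rV['F_2]_d].
Proof.
apply/finset.setP => y; rewrite inE; apply/idP/imsetP => [/submxP[w yx_wh] | [w _ ->]].
  by exists w; rewrite // -yx_wh addrC subrK.
by rewrite addrC addKr submxMl.
Qed.

Lemma card_flat_of x h : row_free h -> #|flat_of x h| = (2 ^ d)%N.
Proof.
move=> free_h; rewrite flat_ofE card_imset; last first.
  by move=> w1 w2 /addrI; exact: row_free_inj.
by rewrite card_rV_F2.
Qed.

Lemma flat_of_subset x h x0 M :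
  flat_of x h \subset flat_of x0 M -> (x - x0 <= M)%MS && (h <= M)%MS.
Proof.
move=> /fintype.subsetP sub_hM; have x_x0M : (x - x0 <= M)%MS.
  by have := sub_hM x; rewrite !inE subrr sub0mx; apply.
rewrite x_x0M; apply/row_subP => i.
have := sub_hM (x + row i h); rewrite !inE addrAC subrr add0r row_sub => /(_ isT).
move=> /submxB/(_ x_x0M); congr (_ <= _)%MS.
by rewrite opprB addrA subrK addrC addKr.
Qed.

Lemma eq_flat_of x h x0 M :
  (flat_of x h == flat_of x0 M) = (x - x0 <= M)%MS && (h == M)%MS.
Proof.
apply/eqP/andP => [eq_xh | [x_x0M /andP[hM Mh]]].
  have /andP[-> hM] : (x - x0 <= M)%MS && (h <= M)%MS.
    by apply: flat_of_subset; rewrite eq_xh.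
  have /andP[_ Mh] : (x0 - x <= h)%MS && (M <= h)%MS.
    by apply: flat_of_subset; rewrite eq_xh.
  by rewrite /eqmx hM Mh.
apply/finset.setP => y; rewrite !inE; apply/idP/idP => y_in.
  have -> : y - x0 = (y - x) + (x - x0) by rewrite addrA subrK.
  by rewrite addmx_sub // (submx_trans y_in).
have -> : y - x = (y - x0) - (x - x0) by rewrite opprB addrA subrK.
by rewrite submxB // (submx_trans _ Mh).
Qed.

End FlatParametrisation.

Section BoxProduct.
Variables (R : comRingType) (n : nat) (g : vec n -> R).

(* For [g] with values in {1, -1}, the summand of the Gowers norm ||g||_{U^k}. *)
Definition box_prod k (x : vec n) (h : 'M['F_2]_(k, n)) : R :=
  \prod_(w : 'rV['F_2]_k) g (x + w *m h).

Lemma box_prod_col_mx k x (r : vec n) (h : 'M['F_2]_(k, n)) :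
  box_prod x (col_mx r h) = box_prod x h * box_prod (x + r) h.
Proof.
rewrite /box_prod big_row_mx big_rV1_F2 /=.
by congr (_ * _); apply: eq_bigr => w _;
  rewrite mul_row_col ?mul0mx ?mul1mx ?add0r ?addrA.
Qed.

Lemma sum_box_prod_succ k :
  \sum_(x : vec n) \sum_(h : 'M['F_2]_(k.+1, n)) box_prod x h =
  \sum_(h : 'M['F_2]_(k, n)) (\sum_(x : vec n) box_prod x h) ^+ 2.
Proof.
under eq_bigr do rewrite (@big_col_mx _ _ _ _ 1 k n) /= exchange_big.
rewrite exchange_big; apply: eq_bigr => h _.
rewrite expr2 mulr_suml; apply: eq_bigr => x _.
rewrite mulr_sumr [RHS](reindex_inj (addrI x)).
by apply: eq_bigr => r _; rewrite box_prod_col_mx.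
Qed.

Lemma box_prod_row_free d x (h : 'M['F_2]_(d, n)) :
  row_free h -> box_prod x h = \prod_(y in flat_of x h) g y.
Proof.
move=> free_h; rewrite flat_ofE big_imset //=.
by move=> w1 w2 _ _ /addrI; exact: row_free_inj.
Qed.

End BoxProduct.

Lemma sum_box_prod_ge0 (R : realDomainType) n (g : vec n -> R) k :
  0 <= \sum_(x : vec n) \sum_(h : 'M['F_2]_(k.+1, n)) box_prod g x h.
Proof. by rewrite sum_box_prod_succ; apply: sumr_ge0 => h _; exact: sqr_ge0. Qed.

Lemma card_eqmx_row_free (F : finFieldType) d n (M : 'M[F]_(d, n)) : row_free M ->
  #|[set h : 'M[F]_(d, n) | (h == M)%MS]| = #|[set G : 'M[F]_d | G \in unitmx]|.
Proof.
move=> free_M; rewrite -(card_imset _ (row_free_inj free_M)).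
congr #|pred_of_set _|; apply/finset.setP => h; rewrite inE.
apply/idP/imsetP => [eq_hM | [G]]; last first.
  by rewrite inE => unit_G ->; apply/eqmxP/eqmxMfull; rewrite row_full_unit.
have /submxP[G def_h] := proj1 (andP eq_hM); exists G => //.
rewrite inE -row_free_unit /row_free eqn_leq rank_leq_row /=.
by rewrite -{1}(eqP free_M) -(eqmx_rank eq_hM) def_h mxrankM_maxl.
Qed.

(* The number of pairs (base point, ordered basis) describing one d-flat. *)
Definition frames_per_flat d := (2 ^ d * #|[set G : 'M['F_2]_d | G \in unitmx]|)%N.

Section Flats.
Variables n d : nat.

Lemma flatsP (Q : {set vec n}) :
  reflect (exists x0 (M : 'M['F_2]_(d, n)), row_free M /\ Q = flat_of x0 M)
          (Q \in flats n d).
Proof.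
rewrite inE; apply: (iffP existsP) => [[x0 /existsP[M /andP[free_M /eqP ->]]] |].
  by exists x0, M.
by move=> [x0 [M [free_M ->]]]; exists x0; apply/existsP; exists M; apply/andP.
Qed.

Lemma card_flat_frames x0 (M : 'M['F_2]_(d, n)) : row_free M ->
  #|[set p : vec n * 'M['F_2]_(d, n) |
      row_free p.2 && (flat_of p.1 p.2 == flat_of x0 M)]| = frames_per_flat d.
Proof.
move=> free_M; rewrite /frames_per_flat -(card_flat_of x0 free_M).
rewrite -(card_eqmx_row_free free_M) -cardsX; congr #|pred_of_set _|.
apply/finset.setP => -[x h]; rewrite !inE eq_flat_of /= andbCA; congr (_ && _).
by apply/andb_idl => /eqmx_rank; rewrite /row_free => ->.
Qed.

Lemma sum_flat_frames (V : nmodType) (G : {set vec n} -> V) :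
  \sum_(p : vec n * 'M['F_2]_(d, n) | row_free p.2) G (flat_of p.1 p.2) =
  (\sum_(Q in flats n d) G Q) *+ frames_per_flat d.
Proof.
rewrite -sumrMnl (partition_big (fun p => flat_of p.1 p.2) (mem (flats n d))) /=;
  last by move=> [x h] free_h; apply/flatsP; exists x, h.
apply: eq_bigr => _ /flatsP[x0 [M [free_M ->]]].
rewrite -(card_flat_frames x0 free_M) -sumr_const.
by apply: eq_big => [p | p /andP[_ /eqP ->]] //; rewrite inE.
Qed.

End Flats.

Lemma sum_nat_odd_card (T : finType) (S : {set T}) (f : T -> nat) :
  (\sum_(i in S) odd (f i) = #|[set i in S | odd (f i)]|)%N.
Proof.
rewrite -sum1_card big_mkcond [RHS]big_mkcond /=; apply: eq_bigr => i _.
by rewrite inE; case: (i \in S); case: odd.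
Qed.

Lemma sum_signr (R : pzRingType) (T : finType) (S : {set T}) (f : T -> nat) :
  \sum_(i in S) (-1) ^+ f i =
  #|S|%:R - 2 * #|[set i in S | odd (f i)]|%:R :> R.
Proof.
rewrite -sum_nat_odd_card natr_sum mulr_sumr -sumr_const -sumrB.
apply: eq_bigr => i _; rewrite -signr_odd; case: odd => /=.
  by rewrite expr1 mulr1 opprD addrA subrr add0r.
by rewrite mulr0 subr0.
Qed.

Lemma prod_signr_mem (R : pzRingType) (T : finType) (A Q : {set T}) :
  \prod_(y in Q) (-1) ^+ (y \in A) = (-1) ^+ #|Q :&: A| :> R.
Proof.
rewrite prodrXr -sum1_card big_mkcond [X in _ = _ ^+ X]big_mkcond /=.
congr (_ ^+ _); apply: eq_bigr => y _.
by rewrite inE; case: (y \in Q); case: (y \in A).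
Qed.

Section DeficientMatrices.
Variables (F : finFieldType) (d n : nat).

Lemma row_freePn_ker (A : 'M[F]_(d, n)) :
  ~~ row_free A -> exists2 v : 'rV_d, v != 0 & v *m A = 0.
Proof. by rewrite -kermx_eq0 => /rowV0Pn[v /sub_kermxP vA0 nz_v]; exists v. Qed.

Let ker_pairs := [set p : 'rV[F]_d * 'M[F]_(d, n) | (p.1 != 0) && (p.1 *m p.2 == 0)].

Lemma card_not_row_free_ker_pairs :
  (#|[set A : 'M[F]_(d, n) | ~~ row_free A]| <= #|ker_pairs|)%N.
Proof.
pose ker_vec (A : 'M[F]_(d, n)) :=
  odflt 0 [pick v : 'rV[F]_d | (v != 0) && (v *m A == 0)].
rewrite -(card_imset _ (f := fun A => (ker_vec A, A))); last by move=> A1 A2 [].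
apply/subset_leq_card/fintype.subsetP => _ /imsetP[A + ->].
rewrite !inE => /row_freePn_ker[v nz_v vA0] /=.
rewrite /ker_vec; case: pickP => [w // | no_ker].
by have := no_ker v; rewrite nz_v vA0 eqxx.
Qed.

Lemma card_ker_pairs_mul :
  (#|ker_pairs| * #|'rV[F]_n| <= #|'rV[F]_d| * #|'M[F]_(d, n)|)%N.
Proof.
(* (w, h, v) |-> (w, h + w^+ v) is injective on kernel pairs, w^+ a right inverse of w. *)
pose shift (q : ('rV[F]_d * 'M[F]_(d, n)) * 'rV[F]_n) :=
  (q.1.1, q.1.2 + pinvmx q.1.1 *m q.2).
rewrite -cardsT -cardsX -(card_in_imset (f := shift)).
  by rewrite -card_prod max_card.
move=> [[w h] v] [[w' h'] v']; rewrite !inE /= => /andP[/andP[nz_w /eqP wh0] _].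
move=> /andP[/andP[_ /eqP w'h'0] _] [eq_w]; subst w'.
have wP1 : w *m pinvmx w = 1%:M by rewrite mulmxVp // /row_free rank_rV nz_w.
move=> eq_h; have := congr1 (mulmx w) eq_h.
rewrite !mulmxDr wh0 w'h'0 !add0r !(mulmxA w (pinvmx w)) wP1 !mul1mx => eq_v.
by move: eq_h; rewrite eq_v => /addIr ->.
Qed.

Lemma card_row_freeC :
  (#|[set A : 'M[F]_(d, n) | row_free A]| + #|[set A : 'M[F]_(d, n) | ~~ row_free A]|
   = #|'M[F]_(d, n)|)%N.
Proof.
rewrite -(cardsC [set A : 'M[F]_(d, n) | row_free A]); congr (_ + _).
by apply: eq_card => A; rewrite !inE.
Qed.

Lemma card_not_row_free :
  (#|[set A : 'M[F]_(d, n) | ~~ row_free A]| * #|'rV[F]_n|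
     <= #|'rV[F]_d| * #|'M[F]_(d, n)|)%N.
Proof.
exact: leq_trans (leq_mul card_not_row_free_ker_pairs (leqnn _)) card_ker_pairs_mul.
Qed.

End DeficientMatrices.

Section OddFlats.
Variables (n d : nat) (A : {set vec n}).

Definition sgn (y : vec n) : int := (-1) ^+ (y \in A).

Definition odd_flats := [set Q in flats n d | odd #|Q :&: A|].

Lemma sum_box_prod_row_free :
  \sum_(p : vec n * 'M['F_2]_(d, n) | row_free p.2) box_prod sgn p.1 p.2 =
  (#|flats n d|%:R - 2 * #|odd_flats|%:R) *+ frames_per_flat d.
Proof.
rewrite -sum_signr -sum_flat_frames; apply: eq_bigr => -[x h] /= free_h.
by rewrite box_prod_row_free // prod_signr_mem.
Qed.

Lemma sum_box_prod_not_row_free :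
  \sum_(p : vec n * 'M['F_2]_(d, n) | ~~ row_free p.2) box_prod sgn p.1 p.2 <=
  (2 ^ n * #|[set h : 'M['F_2]_(d, n) | ~~ row_free h]|)%N%:R.
Proof.
apply: le_trans (ler_sum (G := fun _ => 1) _ _) _ => [p _ |].
  apply: le_trans (ler_norm _) _.
  by rewrite normr_prod big1 // => y _; rewrite normr_sign.
rewrite sumr_const ler_nat -(card_rV_F2 n) -cardsT -cardsX.
by apply/eq_leq/eq_card => -[x h]; rewrite !inE.
Qed.

Lemma card_frames :
  (frames_per_flat d * #|flats n d| =
   2 ^ n * #|[set h : 'M['F_2]_(d, n) | row_free h]|)%N.
Proof.
have := @sum_flat_frames n d int (fun _ => 1); rewrite !sumr_const -mulrnA.
move=> /eqP; rewrite eqr_nat mulnC => /eqP <-.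
rewrite -[(2 ^ n)%N](card_rV_F2 n) -cardsT -cardsX.
by apply: eq_card => -[x h]; rewrite !inE.
Qed.

Lemma odd_flats_frames_ineq : (0 < d)%N ->
  (2 * #|odd_flats| * frames_per_flat d <=
   #|flats n d| * frames_per_flat d +
   2 ^ n * #|[set h : 'M['F_2]_(d, n) | ~~ row_free h]|)%N.
Proof.
move=> d_gt0; have [k dk] : exists k, d = k.+1 by exists d.-1; rewrite prednK.
rewrite -lez_nat; have := sum_box_prod_ge0 sgn k.
rewrite -dk pair_big (bigID (fun p => row_free p.2)) /=.
rewrite sum_box_prod_row_free => /le_trans/(_ (lerD (lexx _) sum_box_prod_not_row_free)).
move: (frames_per_flat d) #|flats n d| #|odd_flats| (2 ^ n * _)%N => K F O NB.
rewrite mulrnBl -mulrnA mulrnAr -mulrnA; nia.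
Qed.

Lemma card_odd_flats_row_free : (0 < d)%N ->
  (2 * #|odd_flats| * #|[set h : 'M['F_2]_(d, n) | row_free h]|
     <= #|flats n d| * #|'M['F_2]_(d, n)|)%N.
Proof.
move=> d_gt0; have := odd_flats_frames_ineq d_gt0.
rewrite -card_row_freeC; have N_gt0 : (0 < 2 ^ n)%N by rewrite expn_gt0.
move: card_frames N_gt0; move: (frames_per_flat d) #|flats n d| #|odd_flats|.
move: #|[set h | row_free h]| #|[set h | ~~ row_free h]| (2 ^ n)%N.
move=> Fu B N K F O KF N_gt0 frames_ineq.
by rewrite -(leq_pmul2l N_gt0); apply: (@leq_trans (2 * O * (K * F))); nia.
Qed.

Lemma card_odd_flats_le : (0 < d)%N ->
  (2 * #|odd_flats| * 2 ^ n <= #|flats n d| * 2 ^ n + 2 * #|flats n d| * 2 ^ d)%N.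
Proof.
move=> d_gt0; have := card_odd_flats_row_free d_gt0.
have := card_not_row_free 'F_2 d n; rewrite !card_rV_F2 -card_row_freeC.
have odd_le : (#|odd_flats| <= #|flats n d|)%N.
  by apply/subset_leq_card/fintype.subsetP => Q; rewrite inE => /andP[].
have M_gt0 : (0 < #|'M['F_2]_(d, n)|)%N by apply/card_gt0P; exists 0.
rewrite -card_row_freeC in M_gt0; move: odd_le M_gt0.
move: #|odd_flats| #|flats n d| #|[set h | row_free h]| #|[set h | ~~ row_free h]|.
move=> O F Fu B odd_le M_gt0 deficient odd_full.
by rewrite -(leq_pmul2r M_gt0); nia.
Qed.

End OddFlats.

Section LambdaBound.
Variables (R : realType) (d s : nat).
Hypotheses (d_gt0 : (0 < d)%N) (odd_s : odd s).

Lemma lambda_A_le n (A : {set vec n}) :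
  lambda_A R d s A <= 1 / 2 + (2 ^ d)%:R / (2 ^ n)%:R.
Proof.
have bound_ge0 : 0 <= 1 / 2 + (2 ^ d)%:R / (2 ^ n)%:R :> R.
  by rewrite addr_ge0 ?divr_ge0.
rewrite /lambda_A; set c := #|_|; set F := #|flats n d|.
have c_le : (c <= #|odd_flats d A|)%N.
  apply/subset_leq_card/fintype.subsetP => Q; rewrite !inE => /andP[-> /eqP ->].
  by rewrite odd_s.
have := card_odd_flats_le A d_gt0.
have [-> _ | F_gt0 ineq] := posnP F; first by rewrite invr0 mulr0.
rewrite ler_pdivrMr ?ltr0n //.
have N_gt0 : (0 < 2 ^ n)%N by rewrite expn_gt0.
rewrite (_ : _ * F%:R = (F * 2 ^ n + 2 * F * 2 ^ d)%N%:R / (2 * 2 ^ n)%N%:R); last first.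
  by rewrite !natrD !natrM; field; rewrite -natrD !pnatr_eq0 -!lt0n addn_gt0 N_gt0.
rewrite ler_pdivlMr ?ltr0n ?muln_gt0 // -natrM ler_nat; nia.
Qed.

Lemma lambda_star_le n : lambda_star R n d s <= 1 / 2 + (2 ^ d)%:R / (2 ^ n)%:R.
Proof. by apply: bigmax_le => // A _; exact: lambda_A_le. Qed.

End LambdaBound.

Local Open Scope classical_set_scope.

Lemma cvg_half_add_pow2_ratio (R : realType) d :
  (fun n => 1 / 2 + (2 ^ d)%:R / (2 ^ n)%:R : R) @ \oo --> (1 / 2 : R).
Proof.
have -> : (fun n => 1 / 2 + (2 ^ d)%:R / (2 ^ n)%:R : R) =
          (fun n => 1 / 2 + geometric (2 ^ d)%:R 2^-1 n).
  by apply/funext => n; rewrite /geometric /= !natrX exprVn.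
rewrite -[X in _ --> X]addr0; apply: cvgD; first exact: cvg_cst.
by apply: cvg_geometric; rewrite ger0_norm ?invr_ge0 ?invf_lt1 ?ltr1n.
Qed.

Theorem theorem1p3 (R : realType) (d s : nat) :
  (1 <= d)%N -> odd s -> (1 < s)%N -> (s < 2 ^ d)%N ->
  lambda_lim R d s <= 1 / 2.
Proof.
(* Only the parity of s matters. *)
move=> d_gt0 odd_s _ _; rewrite /lambda_lim.
(* The limit of a divergent sequence is the default point 0 of R. *)
have [cvg_lambda | /dvgP ->] := pselect (cvgn (fun n => lambda_star R n d s)); last first.
  by rewrite [point]/(0 : R) divr_ge0.
have lim_diff := cvgB cvg_lambda (@cvg_half_add_pow2_ratio R d).
rewrite -subr_le0; apply: cvgr_to_le (lim_diff _) _.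
by apply: nearW => n; rewrite subr_le0; exact: lambda_star_le.
Qed.
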